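(* For every local category $\mathbb{C}$, $\mathbf{R}[\mathbb{C}]$ is a restriction category.
   Context: Composition is diagrammatic. A local category is a category $\mathbb{C}$ with, for each object $M$, an object $\mathsf{L}M$ and a morphism $\eta_M:M\to\mathsf{L}M$ such that (L.1) $\mathsf{L}\mathsf{L}M=\mathsf{L}M$ and $\eta_{\mathsf{L}M}=\mathrm{id}$; (L.2) each $\eta_M$ is monic; (L.3) for every $M$ and $f:N\to\mathsf{L}M$ a pullback of $\eta_M$ along $f$ exists, with leg $m:P\to N$, such that $\mathsf{L}P=\mathsf{L}N$ and $m\eta_N=\eta_P$. An object $M$ is total if $M=\mathsf{L}M$ and $\eta_M=\mathrm{id}_M$. $\mathbf{R}[\mathbb{C}]$ has as objects the total objects of $\mathbb{C}$. A morphism $M\to N$ is an isomorphism class of pairs $(U,f)$ with $U$ an object of $\mathbb{C}$ satisfying $\mathsf{L}U=M$ and $f:U\to N$ a morphism, where $(U,f)$ and $(V,g)$ are isomorphic if there is an isomorphism $\varphi:U\to V$ with $\varphi\eta_V=\eta_U$ and $\varphi g=f$. The identity on $M$ is $(M,\mathrm{id}_M)$. The composite of $(U,f):M\to N$ and $(V,g):N\to P$ is $(W,\pi_Vg)$, where $W$ with projections $\pi_V:W\to V$ and $W\to U$ is a pullback of $\eta_V$ along $f$. The restriction of $(U,f)$ is $\overline{(U,f)}=(U,\eta_U):M\to M$. A restriction category is a category with an assignment to each $f:A\to B$ of $\bar f:A\to A$ such that: (R.1) $\bar ff=f$; (R.2) $\bar f\bar g=\bar g\bar f$ for $f:A\to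 B$, $g:A\to C$; (R.3) $\bar g\bar f=\overline{\bar gf}$ for $f:A\to B$, $g:A\to C$; (R.4) $f\bar g=\overline{fg}f$ for $f:A\to B$, $g:B\to C$. *)

From Stdlib Require Import ClassicalEpsilon RelationClasses.

Set Implicit Arguments.

(* Categories, presented by a type of objects and a type of arrows with
   domain / codomain maps.  comp f g is the diagrammatic composite f;g
   (meaningful when cod f = dom g). *)
Record Category := {
  ob : Type;
  ar : Type;
  dom : ar -> ob;
  cod : ar -> ob;
  idm : ob -> ar;
  comp : ar -> ar -> ar;
  dom_idm : forall A, dom (idm A) = A;
  cod_idm : forall A, cod (idm A) = A;
  dom_comp : forall f g, cod f = dom g -> dom (comp f g) = dom f;
  cod_comp : forall f g, cod f = dom g -> cod (comp f g) = cod g;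
  comp_idl : forall f, comp (idm (dom f)) f = f;
  comp_idr : forall f, comp f (idm (cod f)) = f;
  comp_assoc : forall f g h, cod f = dom g -> cod g = dom h ->
      comp (comp f g) h = comp f (comp g h)
}.

Arguments dom {c} _.
Arguments cod {c} _.
Arguments idm {c} _.
Arguments comp {c} _ _.

Section CatDefs.
Context {C : Category}.

Definition monic (e : ar C) : Prop :=
  forall a b : ar C, cod a = dom e -> cod b = dom e -> dom a = dom b ->
    comp a e = comp b e -> a = b.

Definition is_iso (phi : ar C) : Prop :=
  exists psi : ar C, dom psi = cod phi /\ cod psi = dom phi /\
    comp phi psi = idm (dom phi) /\ comp psi phi = idm (cod phi).

(* [is_pullback h f P m p] : P with legs m : P -> dom f and p : P -> dom h
   is a pullback of h along f (so m is the pulled-back copy of h). *)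
Definition is_pullback (h f : ar C) (P : ob C) (m p : ar C) : Prop :=
  dom m = P /\ cod m = dom f /\ dom p = P /\ cod p = dom h /\
  comp m f = comp p h /\
  forall (Q : ob C) (a b : ar C),
    dom a = Q -> cod a = dom f -> dom b = Q -> cod b = dom h ->
    comp a f = comp b h ->
    exists u : ar C, dom u = Q /\ cod u = P /\ comp u m = a /\ comp u p = b /\
      forall u' : ar C, dom u' = Q -> cod u' = P -> comp u' m = a ->
        comp u' p = b -> u' = u.
End CatDefs.

Record LocalCategory := {
  lcat : Category;
  Lo : ob lcat -> ob lcat;
  eta : ob lcat -> ar lcat;
  dom_eta : forall M, dom (eta M) = M;
  cod_eta : forall M, cod (eta M) = Lo M;
  L1_idem : forall M, Lo (Lo M) = Lo M;
  L1_eta : forall M, eta (Lo M) = idm (Lo M);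
  L2_monic : forall M, monic (eta M);
  L3_pullback : forall (M : ob lcat) (f : ar lcat), cod f = Lo M ->
    exists (P : ob lcat) (m p : ar lcat),
      is_pullback (eta M) f P m p /\ Lo P = Lo (dom f) /\
      comp m (eta (dom f)) = eta P
}.

Section RC.
Variable LC : LocalCategory.
Local Notation C := (lcat LC).
Local Notation L := (Lo LC).
Local Notation eta := (eta LC).

Definition total (M : ob C) : Prop := L M = M /\ eta M = idm M.

Definition RCob : Type := { M : ob C | total M }.

Definition RCpre (M N : RCob) : Type :=
  { uf : ob C * ar C | L (fst uf) = proj1_sig M /\ dom (snd uf) = fst uf /\
                        cod (snd uf) = proj1_sig N }.

Definition RCeq (M N : RCob) (x y : RCpre M N) : Prop :=
  let U := fst (proj1_sig x) in let f := snd (proj1_sig x) in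
  let V := fst (proj1_sig y) in let g := snd (proj1_sig y) in
  exists phi : ar C, dom phi = U /\ cod phi = V /\ is_iso phi /\
    comp phi (eta V) = eta U /\ comp phi g = f.

Definition RCid (M : RCob) : RCpre M M.
Proof.
  refine (exist _ (proj1_sig M, idm (proj1_sig M)) _); simpl.
  destruct M as [M [HL He]]; simpl.
  split; [exact HL | split; [apply dom_idm | apply cod_idm]].
Defined.

Definition pb_spec (M : ob C) (f : ar C) (w : ob C * ar C * ar C) : Prop :=
  let '(P, m, p) := w in
  is_pullback (eta M) f P m p /\ L P = L (dom f) /\ comp m (eta (dom f)) = eta P.

Definition choose_pb (M : ob C) (f : ar C) : ob C * ar C * ar C :=
  epsilon (inhabits (dom f, idm (dom f), idm (dom f))) (pb_spec M f).

Lemma choose_pb_spec (M : ob C) (f : ar C) :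
  cod f = L M -> pb_spec M f (choose_pb M f).
Proof.
  intro H. unfold choose_pb. apply epsilon_spec.
  destruct (L3_pullback LC M f H) as [P [m [p Hp]]].
  exists (P, m, p). exact Hp.
Qed.

Lemma RCcomp_ok (M N P : RCob) (x : RCpre M N) (y : RCpre N P) :
  let w := choose_pb (fst (proj1_sig y)) (snd (proj1_sig x)) in
  L (fst (fst w)) = proj1_sig M /\
  dom (comp (snd w) (snd (proj1_sig y))) = fst (fst w) /\
  cod (comp (snd w) (snd (proj1_sig y))) = proj1_sig P.
Proof.
  destruct x as [[U f] [HU [Hf1 Hf2]]]; destruct y as [[V g] [HV [Hg1 Hg2]]];
  simpl in *.
  assert (Hc : cod f = L V) by (rewrite Hf2; symmetry; exact HV).
  pose proof (choose_pb_spec V f Hc) as Hs.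
  destruct (choose_pb V f) as [[W m] p]; simpl in *.
  destruct Hs as [[Hm1 [Hm2 [Hp1 [Hp2 _]]]] [HL _]].
  assert (Hpg : cod p = dom g) by (rewrite Hp2, dom_eta; symmetry; exact Hg1).
  split; [rewrite HL, Hf1; exact HU|].
  split; [rewrite dom_comp by exact Hpg; exact Hp1|].
  rewrite cod_comp by exact Hpg; exact Hg2.
Qed.

(* Composite of (U,f) : M -> N and (V,g) : N -> P is (W, pi_V g), with W the
   (L.3)-pullback of eta_V along f. *)
Definition RCcomp (M N P : RCob) (x : RCpre M N) (y : RCpre N P) : RCpre M P :=
  let w := choose_pb (fst (proj1_sig y)) (snd (proj1_sig x)) in
  exist _ (fst (fst w), comp (snd w) (snd (proj1_sig y))) (RCcomp_ok x y).

Definition RCrst (M N : RCob) (x : RCpre M N) : RCpre M M.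
Proof.
  refine (exist _ (fst (proj1_sig x), eta (fst (proj1_sig x))) _); simpl.
  destruct (proj2_sig x) as [HU _].
  split; [exact HU | split; [apply dom_eta | rewrite cod_eta; exact HU]].
Defined.
End RC.

(* Restriction categories.  Hom-sets are setoids: a morphism of R[C] is an
   isomorphism class of representatives, modelled as the setoid of
   representatives modulo the isomorphism relation. *)
Record CatData := {
  cob : Type;
  chom : cob -> cob -> Type;
  ceq : forall A B, chom A B -> chom A B -> Prop;
  cid : forall A, chom A A;
  ccomp : forall A B C, chom A B -> chom B C -> chom A C;
  crst : forall A B, chom A B -> chom A A
}.

Arguments ceq {c A B} _ _.
Arguments cid {c} A.
Arguments ccomp {c A B C} _ _.
Arguments crst {c A B} _.

Definition is_category (D : CatData) : Prop :=
  (forall A B, Equivalence (@ceq D A B)) /\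
  (forall A B C (f f' : chom D A B) (g g' : chom D B C),
      ceq f f' -> ceq g g' -> ceq (ccomp f g) (ccomp f' g')) /\
  (forall A B (f : chom D A B), ceq (ccomp (cid A) f) f) /\
  (forall A B (f : chom D A B), ceq (ccomp f (cid B)) f) /\
  (forall A B C E (f : chom D A B) (g : chom D B C) (h : chom D C E),
      ceq (ccomp (ccomp f g) h) (ccomp f (ccomp g h))).

Definition is_restriction_category (D : CatData) : Prop :=
  is_category D /\
  (forall A B (f f' : chom D A B), ceq f f' -> ceq (crst f) (crst f')) /\
  (forall A B (f : chom D A B), ceq (ccomp (crst f) f) f) /\
  (forall A B C (f : chom D A B) (g : chom D A C),
      ceq (ccomp (crst f) (crst g)) (ccomp (crst g) (crst f))) /\
  (forall A B C (f : chom D A B) (g : chom D A C),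
      ceq (ccomp (crst g) (crst f)) (crst (ccomp (crst g) f))) /\
  (forall A B C (f : chom D A B) (g : chom D B C),
      ceq (ccomp f (crst g)) (ccomp (crst (ccomp f g)) f)).

Definition RCcat (LC : LocalCategory) : CatData :=
  {| cob := RCob LC;
     chom := @RCpre LC;
     ceq := @RCeq LC;
     cid := @RCid LC;
     ccomp := @RCcomp LC;
     crst := @RCrst LC |}.

(** Composition in R[C] pastes (L.3)-pullbacks, so each law of a restriction
    category compares two objects with the universal property of the same
    pullback (or of pullbacks of isomorphic cospans).  The mediating arrows
    between them are mutually inverse by the uniqueness half of that property,
    and they commute with the units because (L.3) requires [m ; eta_N = eta_P]
    of the pulled-back leg.  Monicity of the units (L.2) makes the pullbacks of
    [eta_U] along [eta_U] and along [eta_W = m ; eta_U] trivial, which gives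
    (R.1) and (R.4). *)
From Stdlib Require Import RelationClasses.

Section Arrows.
Context {C : Category}.

Definition hom (f : ar C) (X Y : ob C) : Prop := dom f = X /\ cod f = Y.

Lemma hom_idm (X : ob C) : hom (idm X) X X.
Proof. split; [apply dom_idm | apply cod_idm]. Qed.

Lemma hom_cod_dom {f g} {X Y Z : ob C} : hom f X Y -> hom g Y Z -> cod f = dom g.
Proof. intros [] []; congruence. Qed.

Lemma hom_comp {f g} {X Y Z : ob C} : hom f X Y -> hom g Y Z -> hom (comp f g) X Z.
Proof.
  intros hf hg. pose proof (hom_cod_dom hf hg) as E. destruct hf, hg.
  split; [rewrite dom_comp | rewrite cod_comp]; congruence.
Qed.

Lemma comp_idm_l {f} {X Y : ob C} : hom f X Y -> comp (idm X) f = f.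
Proof. intros [<- _]; apply comp_idl. Qed.

Lemma comp_idm_r {f} {X Y : ob C} : hom f X Y -> comp f (idm Y) = f.
Proof. intros [_ <-]; apply comp_idr. Qed.

Lemma comp_assoc_rewrite {a b c : ar C} (d : ar C) :
  comp a b = c -> cod a = dom b -> cod b = dom d -> comp a (comp b d) = comp c d.
Proof. intros <- Hab Hbd. symmetry; apply comp_assoc; assumption. Qed.

Lemma iso_intro {phi psi} {X Y : ob C} : hom phi X Y -> hom psi Y X ->
  comp phi psi = idm X -> comp psi phi = idm Y -> is_iso phi.
Proof. intros [<- <-] [] E1 E2. exists psi; auto. Qed.

Lemma iso_inverse {phi} {X Y : ob C} : is_iso phi -> hom phi X Y ->
  exists psi, hom psi Y X /\ comp phi psi = idm X /\ comp psi phi = idm Y.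
Proof. intros (psi & H1 & H2 & H3 & H4) [<- <-]. exists psi; repeat split; auto. Qed.
End Arrows.

#[local] Hint Resolve hom_idm hom_comp : core.

Ltac match_ends := eapply hom_cod_dom; eauto.

(** [rewrite_comp E], for [E : comp a b = c], also rewrites [comp a b] where it
    only occurs as the prefix of a right-bracketed [comp a (comp b d)]. *)
Ltac reassoc := repeat rewrite comp_assoc by match_ends.
Ltac rewrite_comp E :=
  first [rewrite E | rewrite (comp_assoc_rewrite _ E) by match_ends].
Ltac rewrite_comp_rev E :=
  first [rewrite <- E | rewrite <- (comp_assoc_rewrite _ (eq_sym E)) by match_ends].

Section Pullbacks.
Context {C : Category}.
Context {h f : ar C} {P : ob C} {m p : ar C}.
Hypothesis Pb : is_pullback h f P m p.

Lemma pullback_hom_l : hom m P (dom f).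
Proof. destruct Pb as (? & ? & _); split; assumption. Qed.

Lemma pullback_hom_r : hom p P (dom h).
Proof. destruct Pb as (_ & _ & ? & ? & _); split; assumption. Qed.

Lemma pullback_square : comp m f = comp p h.
Proof. apply Pb. Qed.

Lemma pullback_mediator {Q : ob C} (a b : ar C) : hom a Q (dom f) -> hom b Q (dom h) ->
  comp a f = comp b h -> exists u, hom u Q P /\ comp u m = a /\ comp u p = b.
Proof.
  intros [] [] E. destruct Pb as (_ & _ & _ & _ & _ & Univ).
  destruct (Univ Q a b) as (u & ? & ? & ? & ? & _); auto.
  exists u; repeat split; assumption.
Qed.

Lemma pullback_jointly_monic {Q : ob C} {u u'} : hom u Q P -> hom u' Q P ->
  comp u m = comp u' m -> comp u p = comp u' p -> u = u'.
Proof.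
  intros hu hu' Em Ep.
  pose proof pullback_hom_l as hm; pose proof pullback_hom_r as hp.
  assert (hum : hom (comp u m) Q (dom f)) by eauto.
  assert (hup : hom (comp u p) Q (dom h)) by eauto.
  destruct Pb as (_ & _ & _ & _ & Sq & Univ), hum, hup.
  destruct (Univ Q (comp u m) (comp u p)) as (v & _ & _ & _ & _ & Hv); auto.
  - rewrite !comp_assoc by (apply hm || apply hp || match_ends).
    rewrite Sq; reflexivity.
  - rewrite (Hv u), (Hv u'); auto; (apply hu || apply hu').
Qed.

Lemma pullback_endo_idm {u} : hom u P P -> comp u m = m -> comp u p = p -> u = idm P.
Proof.
  pose proof pullback_hom_l as hm; pose proof pullback_hom_r as hp.
  intros hu Em Ep. apply (pullback_jointly_monic hu (hom_idm P)).
  - rewrite Em, (comp_idm_l hm); reflexivity.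
  - rewrite Ep, (comp_idm_l hp); reflexivity.
Qed.
End Pullbacks.

Section LocalCategoryFacts.
Context {LC : LocalCategory}.
Local Notation C := (lcat LC).
Local Notation L := (Lo LC).
Local Notation eta := (eta LC).

Lemma hom_eta (M : ob C) : hom (eta M) M (L M).
Proof. split; [apply dom_eta | apply cod_eta]. Qed.

Lemma eta_cancel (M : ob C) {X a b} : hom a X M -> hom b X M ->
  comp a (eta M) = comp b (eta M) -> a = b.
Proof. intros [] [] E. apply (L2_monic LC M); rewrite ?dom_eta; congruence. Qed.

Lemma chosen_pullback {U V : ob C} {f} : hom f U (L V) ->
  exists W m p, choose_pb LC V f = (W, m, p) /\ is_pullback (eta V) f W m p /\
    hom m W U /\ hom p W V /\ comp m f = comp p (eta V) /\
    L W = L U /\ comp m (eta U) = eta W.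
Proof.
  intros [Hd Hc]. pose proof (choose_pb_spec LC V f Hc) as Hs.
  destruct (choose_pb LC V f) as [[W m] p], Hs as (Pb & HL & He).
  exists W, m, p. rewrite Hd in HL, He.
  pose proof (pullback_hom_l Pb) as hm; pose proof (pullback_hom_r Pb) as hp.
  rewrite Hd in hm; rewrite dom_eta in hp.
  exact (conj eq_refl (conj Pb (conj hm (conj hp (conj (pullback_square Pb) (conj HL He)))))).
Qed.

Lemma repr_iso_intro {U V : ob C} {f g} phi : hom phi U V -> is_iso phi ->
  comp phi (eta V) = eta U -> comp phi g = f ->
  exists phi, dom phi = U /\ cod phi = V /\ is_iso phi /\
    comp phi (eta V) = eta U /\ comp phi g = f.
Proof. intros [] ? ? ?; exists phi; auto. Qed.
End LocalCategoryFacts.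

#[local] Hint Resolve hom_eta : core.

(** [W2] and [W4] are the domains of the two bracketings of the composite of
    partial maps [f : U -> V], [g : V -> X] and any [h] out of [X] in R[C]. *)
Section Pasting.
Context {LC : LocalCategory}.
Local Notation C := (lcat LC).
Local Notation L := (Lo LC).
Local Notation eta := (eta LC).
Context {U V X W1 W2 W3 W4 : ob C} {f g m1 p1 m2 p2 m3 p3 m4 p4 : ar C}.
Hypotheses (hf : hom f U (L V)) (hg : hom g V (L X)).
Hypotheses (hm1 : hom m1 W1 U) (hp1 : hom p1 W1 V) (hm2 : hom m2 W2 W1) (hp2 : hom p2 W2 X)
  (hm3 : hom m3 W3 V) (hp3 : hom p3 W3 X) (hm4 : hom m4 W4 U) (hp4 : hom p4 W4 W3).
Hypotheses (Pb1 : is_pullback (eta V) f W1 m1 p1)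
  (Pb2 : is_pullback (eta X) (comp p1 g) W2 m2 p2)
  (Pb3 : is_pullback (eta X) g W3 m3 p3) (Pb4 : is_pullback (eta W3) f W4 m4 p4).
Hypothesis Em3 : comp m3 (eta V) = eta W3.

Lemma pullback_pasting_iso : exists phi, hom phi W2 W4 /\ is_iso phi /\
  comp phi m4 = comp m2 m1 /\ comp (comp phi p4) p3 = p2.
Proof.
  pose proof (pullback_square Pb1) as Sq1; pose proof (pullback_square Pb2) as Sq2.
  pose proof (pullback_square Pb3) as Sq3; pose proof (pullback_square Pb4) as Sq4.
  destruct (pullback_mediator Pb3 (Q := W2) (comp m2 p1) p2) as (b & hb & bm3 & bp3).
  { rewrite (proj1 hg); eauto. } { rewrite dom_eta; eauto. } { reassoc. exact Sq2. }
  destruct (pullback_mediator Pb4 (Q := W2) (comp m2 m1) b) as (phi & hphi & Pm & Pp).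
  { rewrite (proj1 hf); eauto. } { rewrite dom_eta; eauto. }
  { rewrite_comp_rev Em3. rewrite_comp bm3. reassoc. rewrite_comp Sq1. reflexivity. }
  destruct (pullback_mediator Pb1 (Q := W4) m4 (comp p4 m3)) as (a & ha & am1 & ap1).
  { rewrite (proj1 hf); eauto. } { rewrite dom_eta; eauto. }
  { reassoc. rewrite_comp Em3. exact Sq4. }
  destruct (pullback_mediator Pb2 (Q := W4) a (comp p4 p3)) as (psi & hpsi & Qm & Qp).
  { rewrite (proj1 (hom_comp hp1 hg)); exact ha. } { rewrite dom_eta; eauto. }
  { reassoc. rewrite_comp ap1. reassoc. rewrite_comp Sq3. reflexivity. }
  assert (phia : comp phi a = m2).
  { apply (pullback_jointly_monic Pb1 (Q := W2)); eauto.
    - reassoc. rewrite_comp am1. rewrite_comp Pm. reflexivity.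
    - reassoc. rewrite_comp ap1. rewrite_comp Pp. rewrite_comp bm3. reflexivity. }
  assert (psib : comp psi b = p4).
  { apply (pullback_jointly_monic Pb3 (Q := W4)); eauto.
    - reassoc. rewrite_comp bm3. rewrite_comp Qm. rewrite_comp ap1. reflexivity.
    - reassoc. rewrite_comp bp3. rewrite_comp Qp. reflexivity. }
  exists phi; split; [exact hphi |]; split; [| split; [exact Pm | rewrite Pp; exact bp3]].
  apply (iso_intro hphi hpsi).
  - apply (pullback_endo_idm Pb2); eauto.
    + reassoc. rewrite_comp Qm. exact phia.
    + reassoc. rewrite_comp Qp. rewrite_comp Pp. exact bp3.
  - apply (pullback_endo_idm Pb4); eauto.
    + reassoc. rewrite_comp Pm. rewrite_comp Qm. exact am1.
    + reassoc. rewrite_comp Pp. exact psib.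
Qed.
End Pasting.

Section PartialMapCategory.
Variable LC : LocalCategory.
Local Notation C := (lcat LC).
Local Notation L := (Lo LC).
Local Notation eta := (eta LC).

Lemma repr_iso_inverse {U V Y : ob C} {f g : ar C} : hom f U Y -> hom g V Y ->
  (exists phi, dom phi = U /\ cod phi = V /\ is_iso phi /\
     comp phi (eta V) = eta U /\ comp phi g = f) ->
  exists phi psi, hom phi U V /\ hom psi V U /\
    comp phi psi = idm U /\ comp psi phi = idm V /\
    comp phi (eta V) = eta U /\ comp phi g = f /\
    comp psi (eta U) = eta V /\ comp psi f = g.
Proof.
  intros hf hg (phi & Hd & Hc & Iphi & Eeta & Ef).
  assert (hphi : hom phi U V) by (split; assumption).
  destruct (iso_inverse Iphi hphi) as (psi & hpsi & E1 & E2).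
  exists phi, psi; repeat (split; [assumption |]); split.
  - rewrite_comp_rev Eeta. rewrite_comp E2. apply (comp_idm_l (hom_eta V)).
  - rewrite_comp_rev Ef. rewrite_comp E2. apply (comp_idm_l hg).
Qed.

Ltac unpack x U f HU hf :=
  destruct x as [[U f] [HU hf]]; simpl in HU, hf;
  lazymatch type of hf with dom f = ?X /\ cod f = ?Y => change (hom f X Y) in hf end.

Lemma RCeq_equiv (M N : RCob LC) : Equivalence (@RCeq LC M N).
Proof.
  split.
  - intros x. unpack x U f HU hf. unfold RCeq; simpl.
    apply (repr_iso_intro (idm U) (hom_idm U)).
    + apply (iso_intro (hom_idm U) (hom_idm U)); apply (comp_idm_l (hom_idm U)).
    + apply (comp_idm_l (hom_eta U)).
    + apply (comp_idm_l hf).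
  - intros x y. unpack x U f HU hf. unpack y V g HV hg. unfold RCeq; simpl.
    intros Hxy.
    destruct (repr_iso_inverse hf hg Hxy)
      as (phi & psi & hphi & hpsi & E1 & E2 & _ & _ & Eeta & Ef).
    apply (repr_iso_intro psi hpsi); [exact (iso_intro hpsi hphi E2 E1) | exact Eeta | exact Ef].
  - intros x y z. unpack x U f HU hf. unpack y V g HV hg. unpack z X h HX hh.
    unfold RCeq; simpl. intros Hxy Hyz.
    destruct (repr_iso_inverse hf hg Hxy) as (a & a' & ha & ha' & Ea1 & Ea2 & Ea & Fa & _ & _).
    destruct (repr_iso_inverse hg hh Hyz) as (b & b' & hb & hb' & Eb1 & Eb2 & Eb & Fb & _ & _).
    apply (repr_iso_intro (comp a b)); eauto.
    + apply (iso_intro (X := U) (Y := X) (psi := comp b' a')); eauto.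
      * reassoc. rewrite_comp Eb1. rewrite (comp_idm_l ha'). exact Ea1.
      * reassoc. rewrite_comp Ea2. rewrite (comp_idm_l hb). exact Eb2.
    + reassoc. rewrite_comp Eb. exact Ea.
    + reassoc. rewrite_comp Fb. exact Fa.
Qed.

Lemma RCcomp_proper (M N P : RCob LC) (x x' : RCpre M N) (y y' : RCpre N P) :
  RCeq x x' -> RCeq y y' -> RCeq (RCcomp x y) (RCcomp x' y').
Proof.
  unpack x U f HU hf. unpack x' U' f' HU' hf'.
  unpack y V g HV hg. unpack y' V' g' HV' hg'.
  unfold RCeq, RCcomp; simpl. intros Hx Hy.
  destruct (repr_iso_inverse hf hf' Hx)
    as (a & a' & ha & ha' & Ea1 & Ea2 & Ea & Fa & _ & Fa').
  destruct (repr_iso_inverse hg hg' Hy)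
    as (b & b' & hb & hb' & Eb1 & Eb2 & Eb & Fb & Eb' & _).
  assert (hfV : hom f U (L V)) by (rewrite HV; exact hf).
  assert (hfV' : hom f' U' (L V')) by (rewrite HV'; exact hf').
  destruct (chosen_pullback hfV) as (W & m & p & Ew & Pb & hm & hp & Sq & _ & Em).
  destruct (chosen_pullback hfV') as (W' & m' & p' & Ew' & Pb' & hm' & hp' & Sq' & _ & Em').
  rewrite Ew, Ew'; simpl.
  destruct (pullback_mediator Pb' (Q := W) (comp m a) (comp p b)) as (phi & hphi & Pm & Pp).
  { rewrite (proj1 hf'); eauto. } { rewrite dom_eta; eauto. }
  { reassoc. rewrite_comp Fa. rewrite_comp Eb. exact Sq. }
  destruct (pullback_mediator Pb (Q := W') (comp m' a') (comp p' b')) as (psi & hpsi & Qm & Qp).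
  { rewrite (proj1 hf); eauto. } { rewrite dom_eta; eauto. }
  { reassoc. rewrite_comp Fa'. rewrite_comp Eb'. exact Sq'. }
  apply (repr_iso_intro phi hphi).
  - apply (iso_intro hphi hpsi).
    + apply (pullback_endo_idm Pb); eauto.
      * reassoc. rewrite_comp Qm. rewrite_comp Pm. reassoc. rewrite_comp Ea1.
        apply (comp_idm_r hm).
      * reassoc. rewrite_comp Qp. rewrite_comp Pp. reassoc. rewrite_comp Eb1.
        apply (comp_idm_r hp).
    + apply (pullback_endo_idm Pb'); eauto.
      * reassoc. rewrite_comp Pm. rewrite_comp Qm. reassoc. rewrite_comp Ea2.
        apply (comp_idm_r hm').
      * reassoc. rewrite_comp Pp. rewrite_comp Qp. reassoc. rewrite_comp Eb2.
        apply (comp_idm_r hp').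
  - rewrite_comp_rev Em'. rewrite_comp Pm. reassoc. rewrite_comp Ea. exact Em.
  - rewrite_comp Pp. reassoc. rewrite_comp Fb. reflexivity.
Qed.

Lemma RCrst_proper (M N : RCob LC) (x x' : RCpre M N) :
  RCeq x x' -> RCeq (RCrst x) (RCrst x').
Proof.
  unpack x U f HU hf. unpack x' U' f' HU' hf'. unfold RCeq; simpl.
  intros (a & Hd & Hc & Ia & Ea & _). exists a; auto.
Qed.

Lemma RCcomp_id_l (M N : RCob LC) (x : RCpre M N) : RCeq (RCcomp (RCid M) x) x.
Proof.
  destruct M as [M [HLM HeM]]. unpack x U f HU hf. unfold RCeq, RCcomp; simpl.
  assert (hi : hom (idm M) M (L U)) by (rewrite HU; auto).
  destruct (chosen_pullback hi) as (W & m & p & Ew & Pb & hm & hp & Sq & _ & Em).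
  rewrite Ew; simpl.
  assert (he : hom (eta U) U M) by (rewrite <- HU; auto).
  destruct (pullback_mediator Pb (Q := U) (eta U) (idm U)) as (u & hu & um & up).
  { rewrite dom_idm; auto. } { rewrite dom_eta; auto. }
  { rewrite (comp_idm_r he), (comp_idm_l (hom_eta U)). reflexivity. }
  apply (repr_iso_intro p hp); [| | reflexivity].
  - apply (iso_intro hp hu); [| exact up].
    apply (pullback_endo_idm Pb); eauto.
    + reassoc. rewrite_comp um. rewrite_comp_rev Sq. apply (comp_idm_r hm).
    + reassoc. rewrite_comp up. apply (comp_idm_r hp).
  - rewrite <- Em, <- Sq, HeM. reflexivity.
Qed.

Lemma RCcomp_id_r (M N : RCob LC) (x : RCpre M N) : RCeq (RCcomp x (RCid N)) x.
Proof.
  destruct N as [N [HLN HeN]]. unpack x U f HU hf. unfold RCeq, RCcomp; simpl.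
  assert (hfN : hom f U (L N)) by (rewrite HLN; auto).
  destruct (chosen_pullback hfN) as (W & m & p & Ew & Pb & hm & hp & Sq & _ & Em).
  rewrite Ew; simpl.
  rewrite HeN, (comp_idm_r hp) in Sq.
  destruct (pullback_mediator Pb (Q := U) (idm U) f) as (u & hu & um & up).
  { rewrite (proj1 hf); auto. } { rewrite dom_eta; auto. }
  { rewrite HeN, (comp_idm_r hf), (comp_idm_l hf). reflexivity. }
  apply (repr_iso_intro m hm); [| exact Em | rewrite (comp_idm_r hp); exact Sq].
  apply (iso_intro hm hu); [| exact um].
  apply (pullback_endo_idm Pb); eauto.
  - reassoc. rewrite_comp um. apply (comp_idm_r hm).
  - reassoc. rewrite_comp up. exact Sq.
Qed.

Lemma RCcomp_assoc (M N P Q : RCob LC) (x : RCpre M N) (y : RCpre N P) (z : RCpre P Q) :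
  RCeq (RCcomp (RCcomp x y) z) (RCcomp x (RCcomp y z)).
Proof.
  unpack x U f HU hf. unpack y V g HV hg. unpack z X h HX hh.
  unfold RCeq, RCcomp; simpl.
  assert (hfV : hom f U (L V)) by (rewrite HV; exact hf).
  destruct (chosen_pullback hfV) as (W1 & m1 & p1 & Ew1 & Pb1 & hm1 & hp1 & _ & _ & Em1).
  assert (hpgX : hom (comp p1 g) W1 (L X)) by (rewrite HX; eauto).
  destruct (chosen_pullback hpgX) as (W2 & m2 & p2 & Ew2 & Pb2 & hm2 & hp2 & _ & _ & Em2).
  assert (hgX : hom g V (L X)) by (rewrite HX; exact hg).
  destruct (chosen_pullback hgX) as (W3 & m3 & p3 & Ew3 & Pb3 & hm3 & hp3 & _ & LW3 & Em3).
  assert (hfW3 : hom f U (L W3)) by (rewrite LW3, HV; exact hf).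
  destruct (chosen_pullback hfW3) as (W4 & m4 & p4 & Ew4 & Pb4 & hm4 & hp4 & _ & _ & Em4).
  rewrite Ew1; simpl; rewrite Ew2; simpl; rewrite Ew3; simpl; rewrite Ew4; simpl.
  destruct (pullback_pasting_iso hfV hgX hm1 hp1 hm2 hp2 hm3 hp3 hm4 hp4 Pb1 Pb2 Pb3 Pb4 Em3)
    as (phi & hphi & Iphi & Pm & Pp).
  apply (repr_iso_intro phi hphi Iphi).
  - rewrite_comp_rev Em4. rewrite_comp Pm. reassoc. rewrite_comp Em1. exact Em2.
  - rewrite <- Pp. reassoc. reflexivity.
Qed.

Lemma RCrst_comp_self (M N : RCob LC) (x : RCpre M N) : RCeq (RCcomp (RCrst x) x) x.
Proof.
  unpack x U f HU hf. unfold RCeq, RCcomp; simpl.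
  destruct (chosen_pullback (hom_eta U)) as (W & m & p & Ew & Pb & hm & hp & Sq & _ & Em).
  rewrite Ew; simpl.
  assert (m_eq_p : m = p) by exact (eta_cancel U hm hp Sq). subst m.
  destruct (pullback_mediator Pb (Q := U) (idm U) (idm U)) as (u & hu & um & up).
  { rewrite dom_eta; auto. } { rewrite dom_eta; auto. } { reflexivity. }
  apply (repr_iso_intro p hp); [| exact Em | reflexivity].
  apply (iso_intro hp hu); [| exact up].
  apply (pullback_endo_idm Pb); eauto; reassoc; rewrite_comp up; apply (comp_idm_r hp).
Qed.

Lemma RCrst_comm (M N P : RCob LC) (x : RCpre M N) (y : RCpre M P) :
  RCeq (RCcomp (RCrst x) (RCrst y)) (RCcomp (RCrst y) (RCrst x)).
Proof.
  unpack x U f HU hf. unpack y V g HV hg. unfold RCeq, RCcomp; simpl.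
  assert (heU : hom (eta U) U (L V)) by (rewrite HV, <- HU; auto).
  assert (heV : hom (eta V) V (L U)) by (rewrite HU, <- HV; auto).
  destruct (chosen_pullback heU) as (W & m & p & Ew & Pb & hm & hp & Sq & _ & Em).
  destruct (chosen_pullback heV) as (W' & m' & p' & Ew' & Pb' & hm' & hp' & Sq' & _ & Em').
  rewrite Ew, Ew'; simpl.
  destruct (pullback_mediator Pb' (Q := W) p m) as (phi & hphi & Pm & Pp).
  { rewrite dom_eta; auto. } { rewrite dom_eta; auto. } { symmetry; exact Sq. }
  destruct (pullback_mediator Pb (Q := W') p' m') as (psi & hpsi & Qm & Qp).
  { rewrite dom_eta; auto. } { rewrite dom_eta; auto. } { symmetry; exact Sq'. }
  apply (repr_iso_intro phi hphi).
  - apply (iso_intro hphi hpsi).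
    + apply (pullback_endo_idm Pb); eauto; reassoc.
      * rewrite_comp Qm. exact Pp.
      * rewrite_comp Qp. exact Pm.
    + apply (pullback_endo_idm Pb'); eauto; reassoc.
      * rewrite_comp Pm. exact Qp.
      * rewrite_comp Pp. exact Qm.
  - rewrite_comp_rev Em'. rewrite_comp Pm. rewrite_comp_rev Sq. exact Em.
  - rewrite_comp Pp. exact Sq.
Qed.

Lemma RCrst_comp_rst (M N P : RCob LC) (x : RCpre M N) (y : RCpre M P) :
  RCeq (RCcomp (RCrst y) (RCrst x)) (RCrst (RCcomp (RCrst y) x)).
Proof.
  unpack x U f HU hf. unpack y V g HV hg. unfold RCeq, RCcomp; simpl.
  assert (heV : hom (eta V) V (L U)) by (rewrite HU, <- HV; auto).
  destruct (chosen_pullback heV) as (W & m & p & Ew & Pb & hm & hp & Sq & _ & Em).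
  rewrite Ew; simpl.
  apply (repr_iso_intro (idm W) (hom_idm W)).
  - apply (iso_intro (hom_idm W) (hom_idm W)); apply (comp_idm_l (hom_idm W)).
  - apply (comp_idm_l (hom_eta W)).
  - rewrite (comp_idm_l (hom_eta W)), <- Em. exact Sq.
Qed.

Lemma RCcomp_rst (M N P : RCob LC) (x : RCpre M N) (y : RCpre N P) :
  RCeq (RCcomp x (RCrst y)) (RCcomp (RCrst (RCcomp x y)) x).
Proof.
  unpack x U f HU hf. unpack y V g HV hg. unfold RCeq, RCcomp; simpl.
  assert (hfV : hom f U (L V)) by (rewrite HV; exact hf).
  destruct (chosen_pullback hfV) as (W & m & p & Ew & Pb & hm & hp & Sq & LW & Em).
  rewrite Ew; simpl.
  assert (heW : hom (eta W) W (L U)) by (rewrite <- LW; auto).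
  destruct (chosen_pullback heW) as (W2 & m2 & p2 & Ew2 & Pb2 & hm2 & hp2 & Sq2 & _ & Em2).
  rewrite Ew2; simpl.
  destruct (pullback_mediator Pb2 (Q := W) (idm W) m) as (phi & hphi & Pm & Pp).
  { rewrite dom_eta; auto. } { rewrite dom_eta; auto. }
  { rewrite (comp_idm_l (hom_eta W)). symmetry; exact Em. }
  apply (repr_iso_intro phi hphi).
  - apply (iso_intro hphi hm2); [exact Pm |].
    apply (pullback_endo_idm Pb2); eauto; reassoc.
    + rewrite_comp Pm. apply (comp_idm_r hm2).
    + rewrite_comp Pp. apply (eta_cancel U (hom_comp hm2 hm) hp2).
      reassoc. rewrite_comp Em. exact Sq2.
  - rewrite_comp_rev Em2. rewrite_comp Pm. apply (comp_idm_l (hom_eta W)).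
  - rewrite_comp Pp. exact Sq.
Qed.
End PartialMapCategory.

Theorem proposition4p5 (LC : LocalCategory) : is_restriction_category (RCcat LC).
Proof.
  split; [split; [| split; [| split; [| split]]] | split; [| split; [| split; [| split]]]];
    simpl; intros.
  - apply RCeq_equiv.
  - apply RCcomp_proper; assumption.
  - apply RCcomp_id_l.
  - apply RCcomp_id_r.
  - apply RCcomp_assoc.
  - apply RCrst_proper; assumption.
  - apply RCrst_comp_self.
  - apply RCrst_comm.
  - apply RCrst_comp_rst.
  - apply RCcomp_rst.
Qed.
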